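(* Let $0<\alpha<1$ and let $u_1,u_2\in C^1[0,+\infty)$. Fix $t_0>0$ with $u_1(t_0)=u_2(t_0)$ and $u_1'(t_0)\neq u_2'(t_0)$, and define $$u(t)=\begin{cases} u_1(t), & 0\le t\le t_0,\\ u_2(t), & t>t_0,\end{cases}$$ so that $u$ is continuous on $[0,+\infty)$ and non-differentiable at $t_0$. Suppose that $u_1^{(\alpha)}(t)$ is continuous (as a function of $t$ on $(0,+\infty)$), and that $u_1^{(\alpha)}(t_0)$ exists and is finite. Then $u^{(\alpha)}(t_0)$ exists and $$u^{(\alpha)}(t_0)=u_1^{(\alpha)}(t_0).$$
   Context: For a function $f$ on $[0,+\infty)$ and $0<\alpha<1$, Jumarie's modified Riemann–Liouville fractional derivative is $$f^{(\alpha)}(t)=\frac{1}{\Gamma(1-\alpha)}\frac{\mathrm{d}}{\mathrm{d}t}\int_0^t (t-x)^{-\alpha}\bigl(f(x)-f(0)\bigr)\,\mathrm{d}x,$$ whenever the derivative exists. $C^1[0,+\infty)$ denotes the continuously differentiable functions on $[0,+\infty)$. *)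

From HB Require Import structures.
From mathcomp Require Import all_boot all_order all_algebra.
From mathcomp Require Import all_classical all_reals all_analysis.
Set Implicit Arguments. Unset Strict Implicit. Unset Printing Implicit Defensive.
Import Order.TTheory GRing.Theory Num.Theory.
Import numFieldNormedType.Exports.
Local Open Scope classical_set_scope.
Local Open Scope ring_scope.

Definition Gamma {R : realType} (s : R) : R :=
  Rintegral (@lebesgue_measure R) `]0%R, +oo[
    (fun x => x `^ (s - 1) * expR (- x)).

Definition jumarie_int {R : realType} (a : R) (f : R -> R) (t : R) : R :=
  Rintegral (@lebesgue_measure R) `[0%R, t]
    (fun x => (t - x) `^ (- a) * (f x - f 0)).

Definition jumarie_exists {R : realType} (a : R) (f : R -> R) (t : R) : Prop :=
  derivable (jumarie_int a f) t 1.

Definition jumarie {R : realType} (a : R) (f : R -> R) (t : R) : R :=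
  (Gamma (1 - a))^-1 * derive1 (jumarie_int a f) t.

(* f in C^1[0,+oo): f has a derivative g on [0,+oo) (one-sided at 0)
   and g is continuous on [0,+oo). *)
Definition C1_nonneg {R : realType} (f : R -> R) : Prop :=
  exists g : R -> R,
    {within `[0%R, +oo[, continuous g} /\
    (forall t : R, 0 < t -> is_derive t 1 f (g t)) /\
    (h^-1 * (f h - f 0)) @[h --> 0^'+] --> g 0.

From HB Require Import structures.
From mathcomp Require Import all_boot all_order all_algebra.
From mathcomp Require Import all_classical all_reals all_analysis.
From mathcomp Require Import ring lra measurable_realfun.
Import Order.TTheory GRing.Theory Num.Theory.
Import numFieldNormedType.Exports.
Local Open Scope classical_set_scope.
Local Open Scope ring_scope.

(* Let I_f(t) be the integral in Jumarie's derivative and D = I_u - I_u1.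
   D vanishes on [0, t0].  For t = t0 + h only the integral over [t0, t]
   survives, and there |u2 - u1| <= M h by the mean value theorem, while the
   kernel (t - x)^(-a) has integral h^(1-a)/(1-a).  Hence
   |D(t0 + h)| <= M h^(2-a)/(1-a) = o(h), so D'(t0) = 0 and I_u has the same
   derivative at t0 as I_u1. *)

Section kernel.
Context {R : realType}.
Implicit Types (a c s t x l : R) (f F : R -> R).

Lemma is_derive_powR_subr c [t x : R] : x < t ->
  is_derive x 1 (fun y => (t - y) `^ c) (- (c * (t - x) `^ (c - 1))).
Proof.
move=> xt.
have dsub : is_derive x 1 (fun y : R => t - y) (-1).
  by have := is_deriveB (is_derive_cst t x 1) (is_derive_id x (1:R)); rewrite sub0r.
have dpow : is_derive (t - x) 1 (@powR R ^~ c) (c * (t - x) `^ (c - 1)).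
  by apply: is_derive1_powR; rewrite subr_gt0.
by have := @is_derive1_comp R _ (fun y => t - y) x _ _ dpow dsub; rewrite mulrN1.
Qed.

Lemma itvcc_left_approx_bound [s t : R] n : s < t -> s < t - (t - s) / n.+2%:R < t.
Proof.
move=> st; have n2 : (2 : R) <= n.+2%:R by rewrite ler_nat.
have e0 : 0 < (t - s) / n.+2%:R by rewrite divr_gt0 ?subr_gt0 ?ltr0n.
have eE : (t - s) / n.+2%:R * n.+2%:R = t - s by rewrite mulfVK ?pnatr_eq0.
move: e0 eE; move: ((t - s) / _) => e e0 eE.
apply/andP; split; nra.
Qed.

Lemma itvco_bigcup_itvcc [s t : R] : s < t ->
  `[s, t[%classic = \bigcup_n `[s, t - (t - s) / n.+2%:R]%classic.
Proof.
move=> st; apply/seteqP; split => x /=; last first.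
  move=> [n _]; rewrite /= !in_itv /= => /andP[-> xb] /=.
  by apply: le_lt_trans xb _; case/andP: (itvcc_left_approx_bound n st).
rewrite in_itv /= => /andP[sx xt].
exists (Num.truncn ((t - s) / (t - x))) => //; rewrite /= in_itv /= sx /=.
have := truncnS_gt ((t - s) / (t - x)).
set m := (Num.truncn _).+1%:R => hm.
have tx0 : 0 < t - x by rewrite subr_gt0.
have m0 : 0 < m by rewrite ltr0n.
have h1 : t - s < m * (t - x) by rewrite -ltr_pdivrMr.
rewrite lerBrDr -lerBrDl ler_pdivrMr ?ltr0n //.
have : m <= (Num.truncn ((t - s) / (t - x))).+2%:R by rewrite ler_nat.
nra.
Qed.

Lemma integral_itvcc_le_FTC f F s t l : s < t ->
  {within `[s, t], continuous f} ->
  (forall x, s <= x <= t -> is_derive x 1 F (f x)) -> F t <= l ->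
  (\int[lebesgue_measure]_(x in `[s, t]) (f x)%:E <= (l - F s)%:E)%E.
Proof.
move=> st cf dF Ftl.
have {}dF x : s <= x -> x <= t -> is_derive x 1 F (f x).
  by move=> sx xt; apply: dF; rewrite sx xt.
have cF : {within `[s, t], continuous F}.
  apply: derivable_within_continuous => x; rewrite in_itv /= => /andP[sx xt].
  by have [] := dF x sx xt.
have FLR : derivable_oo_LRcontinuous F s t.
  have [_ ? ?] := (continuous_within_itvP F st).1 cF.
  split => // x; rewrite in_itv /= => /andP[sx xt].
  by have [] := dF x (ltW sx) (ltW xt).
have F'f : {in `]s, t[, F^`()%classic =1 f}.
  move=> x; rewrite in_itv /= => /andP[sx xt]; rewrite derive1E.
  by have [_ ->] := dF x (ltW sx) (ltW xt).
by rewrite (continuous_FTC2 st cf FLR F'f) -EFinB lee_fin lerD2r.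
Qed.

(* The integrand may blow up at [t]: exhaust [[s, t[] by closed intervals and
   apply monotone convergence. *)
Lemma ge0_integral_itvcc_le_FTC f F s t l : s < t ->
  measurable_fun `[s, t] f ->
  {in `[s, t[, continuous f} ->
  (forall x, s <= x < t -> 0 <= f x) ->
  (forall x, s <= x < t -> is_derive x 1 F (f x)) ->
  (forall x, s <= x < t -> F x <= l) ->
  (\int[lebesgue_measure]_(x in `[s, t]) (f x)%:E <= (l - F s)%:E)%E.
Proof.
move=> st mf cf f0 dF Fl.
pose b n := t - (t - s) / n.+2%:R.
have sbt n : s < b n < t by exact: itvcc_left_approx_bound.
have ndb : {homo (fun n => `[s, b n]%classic) : n m / (n <= m)%N >-> (n <= m)%O}.
  move=> n m nm; apply/subsetPset; apply: subset_itvl; rewrite bnd_simp.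
  rewrite lerD2l lerN2 ler_pM2l ?subr_gt0 // lef_pV2 ?posrE // ler_nat.
  by rewrite !ltnS.
have mfE D : D `<=` `[s, t] -> measurable D -> measurable_fun D (EFin \o f).
  by move=> Dst mD; apply/measurable_EFinP; exact: measurable_funS mf.
rewrite -integral_itv_bndo_bndc; last first.
  by apply: mfE (measurable_itv _); apply: subset_itvl; rewrite bnd_simp.
rewrite (itvco_bigcup_itvcc st).
have f0E n x : `[s, b n]%classic x -> (0 <= (f x)%:E)%E.
  rewrite /= in_itv /= => /andP[sx xb]; rewrite lee_fin f0 // sx.
  by apply: le_lt_trans xb _; case/andP: (sbt n).
have mfb n : measurable_fun `[s, b n] (EFin \o f).
  apply: mfE (measurable_itv _); apply: subset_itvl; rewrite bnd_simp.
  by case/andP: (sbt n) => _ /ltW.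
have cvgI := ge0_nondecreasing_set_cvg_integral (mu := lebesgue_measure) ndb
  (fun n => measurable_itv _) mfb f0E.
rewrite -(cvg_lim _ cvgI) //; apply: lime_le; first by apply/cvg_ex; eexists; exact: cvgI.
apply: nearW => n; have /andP[sb bt] := sbt n.
apply: integral_itvcc_le_FTC => //.
- apply: continuous_in_subspaceT => x; rewrite inE /= in_itv /= => /andP[sx xb].
  by apply: cf; rewrite in_itv /= sx (le_lt_trans xb bt).
- by move=> x /andP[sx xb]; apply: dF; rewrite sx (le_lt_trans xb bt).
- by apply: Fl; rewrite (ltW sb).
Qed.

Lemma derivable1_continuous f x : derivable f x 1 -> {for x, continuous f}.
Proof. by move=> df; apply/differentiable_continuous; rewrite -derivable1_diffP. Qed.

Lemma measurable_kernel a t : measurable_fun setT (fun x : R => (t - x) `^ (- a)).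
Proof. exact/(measurableT_comp (measurable_powR _))/measurable_funB. Qed.

Lemma integral_kernel_le [a s t : R] : a < 1 -> s < t ->
  (\int[lebesgue_measure]_(x in `[s, t]) ((t - x) `^ (- a))%:E <=
     ((t - s) `^ (1 - a) / (1 - a))%:E)%E.
Proof.
move=> a1 st; have a10 : 1 - a != 0 by rewrite subr_eq0 gt_eqF.
pose F y := - ((1 - a)^-1 * (t - y) `^ (1 - a)).
have dF x : x < t -> is_derive x 1 F ((t - x) `^ (- a)).
  move=> xt; have := is_deriveN (is_deriveZ ((1 - a)^-1) (is_derive_powR_subr (1 - a) xt)).
  rewrite scalerN opprK /GRing.scale /= mulrA mulVf // mul1r.
  by rewrite (_ : 1 - a - 1 = - a) //; ring.
rewrite (_ : _ / _ = 0 - F s); last by rewrite /F sub0r opprK mulrC.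
apply: (@ge0_integral_itvcc_le_FTC _ F) => // [|x|x|x|x].
- exact: measurable_funS (measurable_kernel a t).
- rewrite in_itv /= => /andP[_ xt].
  by have [dk _] := is_derive_powR_subr (- a) xt; exact: derivable1_continuous.
- by move=> _; exact: powR_ge0.
- by move=> /andP[_ /dF].
- move=> _; rewrite /F oppr_le0 mulr_ge0 ?powR_ge0 //.
  by rewrite invr_ge0 subr_ge0 ltW.
Qed.

Lemma kernel_integrable [a s t : R] : a < 1 -> s < t ->
  lebesgue_measure.-integrable `[s, t] (EFin \o (fun x => (t - x) `^ (- a))).
Proof.
move=> a1 st; apply/integrableP; split.
  by apply/measurable_EFinP; exact: measurable_funS (measurable_kernel a t).
under eq_integral => x _ do rewrite /comp abse_EFin ger0_norm ?powR_ge0 //.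
exact: le_lt_trans (integral_kernel_le a1 st) (ltry _).
Qed.

Lemma Rintegral_kernel_le [a s t : R] : a < 1 -> s < t ->
  \int[lebesgue_measure]_(x in `[s, t]) (t - x) `^ (- a) <=
     (t - s) `^ (1 - a) / (1 - a).
Proof.
move=> a1 st; have := integral_kernel_le a1 st.
have := integrable_fin_num _ (kernel_integrable a1 st).
move=> /(_ (measurable_itv _)).
by rewrite /Rintegral => /fineK <-; rewrite lee_fin.
Qed.

Section bounded_factor.
Variables (a s t M : R) (f : R -> R).
Hypotheses (a1 : a < 1) (st : s < t) (mf : measurable_fun `[s, t] f)
  (fM : forall x, s <= x <= t -> `|f x| <= M).

Lemma kernel_mulr_integrable :
  lebesgue_measure.-integrable `[s, t] (EFin \o (fun x => (t - x) `^ (- a) * f x)).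
Proof.
have iMk := @integrableZl _ (measurableTypeR R) R lebesgue_measure _
  (measurable_itv `[s, t]) M _ (kernel_integrable a1 st).
apply: le_integrable iMk => // [|x].
  apply/measurable_EFinP/measurable_funM => //.
  exact: measurable_funS (measurable_kernel a t).
rewrite /= in_itv /= => /fM fxM; have M0 : 0 <= M := le_trans (normr_ge0 _) fxM.
rewrite lee_fin normrM (ger0_norm (powR_ge0 _ _)).
by rewrite (ger0_norm (mulr_ge0 M0 (powR_ge0 _ _))) mulrC ler_wpM2r ?powR_ge0.
Qed.

Lemma Rintegral_kernel_mulr_le :
  `|\int[lebesgue_measure]_(x in `[s, t]) ((t - x) `^ (- a) * f x)|
    <= M * ((t - s) `^ (1 - a) / (1 - a)).
Proof.
have ik := kernel_integrable a1 st.
have iMk : lebesgue_measure.-integrable `[s, t]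
    (EFin \o (fun x => M * (t - x) `^ (- a))).
  have := @integrableZl _ (measurableTypeR R) R lebesgue_measure _
    (measurable_itv `[s, t]) M _ ik.
  by apply: eq_integrable => // x _.
have ikf := kernel_mulr_integrable.
apply: le_trans (le_normr_Rintegral _ ikf) _; first exact: measurable_itv.
apply: le_trans (le_Rintegral _ (integrable_norm ikf) iMk _) _.
- exact: measurable_itv.
- move=> x; rewrite /= in_itv /= => /fM fxM.
  by rewrite normrM ger0_norm ?powR_ge0 // mulrC ler_wpM2r ?powR_ge0.
- rewrite RintegralZl //; apply: ler_wpM2l; last exact: Rintegral_kernel_le.
  by apply: le_trans (normr_ge0 (f s)) (fM _ _); rewrite lexx ltW.
Qed.

End bounded_factor.
End kernel.
Arguments kernel_mulr_integrable {R a s t M f}.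
Arguments Rintegral_kernel_mulr_le {R a s t M f}.

Section real_functions.
Context {R : realType}.

Lemma C1_nonneg_continuous [f : R -> R] : C1_nonneg f -> {within `[0, +oo[, continuous f}.
Proof.
move=> [g [_ [df dq]]]; apply/continuous_within_itvcyP; split.
  move=> x; rewrite in_itv /= andbT => x0.
  by have [dfx _] := df x x0; exact: derivable1_continuous.
have : (fun h => h * (h^-1 * (f h - f 0)) + f 0) @ 0^'+ --> 0 * g 0 + f 0.
  apply: cvgD; last exact: cvg_cst.
  by apply: cvgM => //; exact: cvg_at_right_filter cvg_id.
rewrite mul0r add0r; apply: cvg_trans; apply: near_eq_cvg; near=> h.
by rewrite mulrA mulfV ?mul1r ?subrK // gt_eqF.
Unshelve. all: by end_near. Qed.

Lemma C1_nonneg_derive [f : R -> R] : C1_nonneg f ->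
  exists2 g : R -> R,
    (forall t : R, 0 < t -> is_derive t 1 f (g t)) & {in `]0, +oo[, continuous g}.
Proof.
move=> [g [cg [df _]]]; exists g => //.
by have [] := (continuous_within_itvcyP 0 g).1 cg.
Qed.

Lemma continuous_itvcc_bounded [f : R -> R] [s t : R] : {within `[s, t], continuous f} ->
  exists M, forall x, s <= x <= t -> `|f x| <= M.
Proof.
move=> cf; have [st|ts] := leP s t; last first.
  by exists 0 => x /andP[sx xt]; have := le_lt_trans (le_trans sx xt) ts; rewrite ltxx.
have cnf : {within `[s, t], continuous (fun x => `|f x|)}.
  by move=> x; apply: continuous_comp (cf x) _; exact: norm_continuous.
have [c _ cmax] := EVT_max st cnf.
by exists `|f c| => x xst; apply: cmax; rewrite in_itv.
Qed.

Lemma derive_continuous_lipschitz_right [w g : R -> R] [t0 : R] :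
  (forall y, t0 <= y -> is_derive y 1 w (g y)) -> {for t0, continuous g} ->
  exists2 d, 0 < d & exists2 M, 0 <= M &
    forall x, t0 <= x < t0 + d -> `|w x - w t0| <= M * (x - t0).
Proof.
move=> dw /cvgrPdist_lt /(_ 1 ltr01) /nbhs_ballP [d d0 gd].
exists d => //; exists (`|g t0| + 1) => [|x /andP[tx xd]]; first by rewrite addr_ge0.
have [<-|t0x] := eqVneq t0 x; first by rewrite !subrr normr0 mulr0.
have {t0x} tx : t0 < x by rewrite lt_neqAle t0x.
have cw : {within `[t0, x], continuous w}.
  apply: derivable_within_continuous => y; rewrite in_itv /= => /andP[ty _].
  by have [] := dw y ty.
have [c /[dup] cI] := MVT tx (fun y yI => dw y (ltW (andP yI).1)) cw.
rewrite in_itv /= => /andP[tc cx] ->.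
have xt0 : 0 <= x - t0 by rewrite subr_ge0 ltW.
rewrite normrM [`|x - t0|]ger0_norm // ler_wpM2r //.
have /gd /= gc1 : ball t0 d c.
  by rewrite /ball /= ltr0_norm ?subr_lt0 // opprB ltrBlDl (lt_trans cx).
by rewrite -lerBlDl (le_trans (lerB_dist _ _)) // distrC ltW.
Qed.

Lemma is_derive0_of_norm_le_powR (D : R -> R) (x K p : R) : 1 < p ->
  (\forall h \near 0, `|D (x + h) - D x| <= K * `|h| `^ p) -> is_derive x 1 D 0.
Proof.
move=> p1 Dh; have p10 : 0 < p - 1 by rewrite subr_gt0.
suff dq0 : (fun h => h^-1 *: ((D \o shift x) (h *: 1) - D x)) @ 0^' --> 0.
  by apply: DeriveDef; [apply/cvg_ex; exists 0 | exact: cvg_lim].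
apply/cvgr0Pnorm_le => e e0.
have K1 : 0 < `|K| + 1 by rewrite ltr_pwDr.
have r0 : 0 < e / (`|K| + 1) by rewrite divr_gt0.
near=> h.
have h0 : h != 0 by near: h; exact: nbhs_dnbhs_neq.
have hr : `|h| < (e / (`|K| + 1)) `^ (p - 1)^-1.
  by near: h; apply: dnbhs0_lt; rewrite powR_gt0.
have Dhh : `|D (x + h) - D x| <= K * `|h| `^ p by near: h; exact: nbhs_dnbhs Dh.
have hp1 : `|h| `^ (p - 1) < e / (`|K| + 1).
  have := @gt0_ltr_powR R (p - 1) p10 `|h| ((e / (`|K| + 1)) `^ (p - 1)^-1).
  rewrite !nnegrE normr_ge0 powR_ge0 => /(_ isT isT hr) /=.
  by rewrite -powRrM mulVf ?gt_eqF // powRr1 // ltW.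
rewrite /= /GRing.scale /= mulr1 (addrC h) normrM normfV.
rewrite -ler_pdivlMl ?invr_gt0 ?normr_gt0 // invrK; apply: le_trans Dhh _.
rewrite -(mulr_powRB1 (normr_ge0 h) (lt_trans ltr01 p1)) mulrCA ler_wpM2l //.
apply: le_trans (ler_wpM2r (powR_ge0 _ _) (ler_norm K)) _.
apply: le_trans (ler_wpM2l (normr_ge0 K) (ltW hp1)) _.
by rewrite mulrA ler_pdivrMr // mulrDr mulr1 [_ * e]mulrC lerDl ltW.
Unshelve. all: by end_near. Qed.
End real_functions.

Section jumarie_glue.
Context {R : realType}.
Implicit Types (a t : R) (f g : R -> R).

Definition glue (t0 : R) (u1 u2 : R -> R) (t : R) := if t <= t0 then u1 t else u2 t.

Lemma eq_jumarie_int a f g t : {in `[0, t], f =1 g} ->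
  jumarie_int a f t = jumarie_int a g t.
Proof.
move=> fg; apply: eq_Rintegral => x; rewrite inE /= => xI.
have /andP[x0 xt] : 0 <= x <= t by move: xI; rewrite in_itv.
by rewrite fg ?(fg 0) // in_itv /= lexx (le_trans x0 xt).
Qed.

Lemma jumarie_integrand_integrable [a t M : R] [f : R -> R] : a < 1 -> 0 < t ->
  measurable_fun `[0, t] f -> (forall x, 0 <= x <= t -> `|f x| <= M) ->
  lebesgue_measure.-integrable `[0, t]
    (EFin \o (fun x => (t - x) `^ (- a) * (f x - f 0))).
Proof.
move=> a1 t0 mf fM; apply: (kernel_mulr_integrable (M := M + M)) => //.
  by apply: measurable_funB => //; exact: measurable_cst.
move=> x xI; apply: le_trans (ler_normB _ _) _.
by rewrite lerD ?fM // lexx ltW.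
Qed.

Lemma continuous_jumarie_integrand_integrable [a t : R] [f : R -> R] :
  a < 1 -> 0 < t -> {within `[0, t], continuous f} ->
  lebesgue_measure.-integrable `[0, t]
    (EFin \o (fun x => (t - x) `^ (- a) * (f x - f 0))).
Proof.
move=> a1 t0 cf; have [M fM] := continuous_itvcc_bounded cf.
have mf := subspace_continuous_measurable_fun (measurable_itv _) cf.
exact: jumarie_integrand_integrable a1 t0 mf fM.
Qed.

Section glue.
Context {a t0 : R} {u1 u2 : R -> R}.

Lemma jumarie_int_glue_left t : t <= t0 ->
  jumarie_int a (glue t0 u1 u2) t = jumarie_int a u1 t.
Proof.
move=> tt0; apply: eq_jumarie_int => x; rewrite in_itv /= => /andP[_ xt].
by rewrite /glue (le_trans xt tt0).
Qed.

Lemma glue_integrand_integrable [t : R] : a < 1 -> 0 < t ->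
  {within `[0, t], continuous u1} -> {within `[0, t], continuous u2} ->
  lebesgue_measure.-integrable `[0, t]
    (EFin \o (fun x => (t - x) `^ (- a) * (glue t0 u1 u2 x - glue t0 u1 u2 0))).
Proof.
move=> a1 t0' cu1 cu2.
have m1 := subspace_continuous_measurable_fun (measurable_itv _) cu1.
have m2 := subspace_continuous_measurable_fun (measurable_itv _) cu2.
have [M1 hM1] := continuous_itvcc_bounded cu1.
have [M2 hM2] := continuous_itvcc_bounded cu2.
apply: (jumarie_integrand_integrable (M := M1 + M2)) => // [|x xI].
  apply: measurable_fun_if => //; first exact: measurable_fun_ler.
    by apply: measurable_funS m1 => //; exact: subIsetl.
  by apply: measurable_funS m2 => //; exact: subIsetl.
have := hM1 x xI; have := hM2 x xI.
have := normr_ge0 (u1 x); have := normr_ge0 (u2 x).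
by rewrite /glue; case: ifP => _; lra.
Qed.

Lemma jumarie_int_glueB t : a < 1 -> 0 <= t0 < t -> u1 t0 = u2 t0 ->
  {within `[0, t], continuous u1} -> {within `[0, t], continuous u2} ->
  jumarie_int a (glue t0 u1 u2) t - jumarie_int a u1 t =
  \int[lebesgue_measure]_(x in `[t0, t]) ((t - x) `^ (- a) * (u2 x - u1 x)).
Proof.
move=> a1 /andP[t00 t0t] e cu1 cu2.
set u := glue t0 u1 u2; have t0' : 0 < t := le_lt_trans t00 t0t.
have u0 : u 0 = u1 0 by rewrite /u /glue t00.
have i1 := continuous_jumarie_integrand_integrable a1 t0' cu1.
have iu := glue_integrand_integrable a1 t0' cu1 cu2; rewrite -/u in iu.
pose g x := (t - x) `^ (- a) * (u x - u1 x).
have ig : lebesgue_measure.-integrable `[0, t] (EFin \o g).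
  eapply eq_integrable; [exact: measurable_itv| |].
    2: by apply: integrableB; [exact: measurable_itv|exact: iu|exact: i1].
  by move=> x _; rewrite /g /= -EFinB u0 -mulrBr opprB addrA subrK.
have gE : {in `[t0, t], g =1 fun x => (t - x) `^ (- a) * (u2 x - u1 x)}.
  move=> x; rewrite in_itv /= => /andP[]; rewrite /g /u /glue le_eqVlt.
  by case: eqP => [<- _ _|_ /= t0x _]; rewrite ?lexx ?e // leNgt t0x.
have g0 : \int[lebesgue_measure]_(x in `[0, t0]) g x = 0.
  rewrite (eq_Rintegral _ (g := fun _ => 0)); first by rewrite /Rintegral integral0.
  by move=> x; rewrite inE /= in_itv /= => /andP[_ xt0]; rewrite /g /u /glue xt0 subrr mulr0.
have ig' : lebesgue_measure.-integrable `]t0, t] (EFin \o g).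
  by apply: integrableS ig => //; apply: subset_itvr; rewrite bnd_simp.
rewrite /jumarie_int -RintegralB // -/u.
transitivity (\int[lebesgue_measure]_(x in `[0, t]) g x).
  by apply: eq_Rintegral => x _; rewrite /g u0 -mulrBr; congr (_ * _); ring.
have := Rintegral_itvB ig (x := t0); rewrite g0 subr0 => -> //; last first.
  by rewrite bnd_simp ltW.
rewrite (Rintegral_itv_obnd_cbnd ig').
by apply: eq_Rintegral => x; rewrite inE => /gE.
Qed.

Lemma is_derive_jumarie_int_glueB [d M : R] : a < 1 -> 0 <= t0 ->
  {within `[0, +oo[, continuous u1} -> {within `[0, +oo[, continuous u2} ->
  0 < d -> 0 <= M -> (forall x, t0 <= x < t0 + d -> `|u2 x - u1 x| <= M * (x - t0)) ->
  is_derive t0 1 (fun t => jumarie_int a (glue t0 u1 u2) t - jumarie_int a u1 t) 0.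
Proof.
move=> a1 t00 cu1 cu2 d0 M0 lip.
have e : u1 t0 = u2 t0.
  apply/eqP; rewrite eq_sym -subr_eq0 -normr_le0 -(mulr0 M) -(subrr t0).
  by apply: lip; rewrite lexx ltrDl.
have D0 t : t <= t0 -> jumarie_int a (glue t0 u1 u2) t - jumarie_int a u1 t = 0.
  by move=> tt0; rewrite jumarie_int_glue_left // subrr.
apply: (@is_derive0_of_norm_le_powR _ _ _ (M / (1 - a)) (2 - a)).
  by rewrite ltrBrDl -ltrBrDr addrK.
have a10 : 0 < 1 - a by rewrite subr_gt0.
near=> h; rewrite (D0 t0) // subr0.
have [h0|h0] := leP h 0.
  by rewrite D0 ?gerDl // normr0 mulr_ge0 ?powR_ge0 // divr_ge0 // ltW.
have : `|h| < d by near: h; exact: (@nbhs0_lt _ R^o _ d0).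
rewrite gtr0_norm // => hd.
have t0h : t0 < t0 + h by rewrite ltrDl.
have sub0 : `[t0, t0 + h]%classic `<=` `[0, +oo[%classic.
  by apply: subset_itv; rewrite bnd_simp.
have sub1 : `[0, t0 + h]%classic `<=` `[0, +oo[%classic.
  by apply: subset_itvl; rewrite bnd_simp.
rewrite jumarie_int_glueB ?t00 //; try exact: continuous_subspaceW sub1 _.
apply: le_trans (Rintegral_kernel_mulr_le (M := M * h) a1 t0h _ _) _.
- apply: measurable_funB; apply: subspace_continuous_measurable_fun => //.
  + exact: continuous_subspaceW sub0 cu2.
  + exact: continuous_subspaceW sub0 cu1.
- move=> x /andP[tx xh]; apply: le_trans (lip x _) _.
    by rewrite tx (le_lt_trans xh) // ltrD2l.
  by rewrite ler_wpM2l // lerBlDl.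
suff -> : M / (1 - a) * h `^ (2 - a) = M * h * (h `^ (1 - a) / (1 - a)).
  by rewrite addrAC subrr add0r.
rewrite -(mulr_powRB1 (ltW h0)); last by rewrite subr_gt0 (lt_trans a1) // ltr1n.
by rewrite (_ : 2 - a - 1 = 1 - a); ring.
Unshelve. all: by end_near. Qed.
End glue.
End jumarie_glue.

Theorem mainTheorem1 (R : realType) (a : R) (u1 u2 : R -> R) (t0 : R) :
  0 < a -> a < 1 ->
  C1_nonneg u1 -> C1_nonneg u2 ->
  0 < t0 ->
  u1 t0 = u2 t0 ->
  derive1 u1 t0 != derive1 u2 t0 ->
  (forall t : R, 0 < t -> jumarie_exists a u1 t) ->
  {within `]0%R, +oo[, continuous (jumarie a u1)} ->
  let u := fun t : R => if t <= t0 then u1 t else u2 t in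
  jumarie_exists a u t0 /\ jumarie a u t0 = jumarie a u1 t0.
Proof.
move=> _ a1 C1 C2 t00 e _ ex1 _ u.
have [g1 dg1 cg1] := C1_nonneg_derive C1.
have [g2 dg2 cg2] := C1_nonneg_derive C2.
have dw y : t0 <= y -> is_derive y 1 (u2 \- u1) ((g2 \- g1) y).
  by move=> ty; apply: is_deriveB; [apply: dg2 | apply: dg1]; exact: lt_le_trans ty.
have cg : {for t0, continuous (g2 \- g1)}.
  by apply: cvgB; [apply: cg2 | apply: cg1]; rewrite in_itv /= andbT t00.
have [d d0 [M M0 lip]] := derive_continuous_lipschitz_right dw cg.
have lip' x : t0 <= x < t0 + d -> `|u2 x - u1 x| <= M * (x - t0).
  by move=> /lip; rewrite /= -e subrr subr0.
have dD := is_derive_jumarie_int_glueB a1 (ltW t00) (C1_nonneg_continuous C1)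
  (C1_nonneg_continuous C2) d0 M0 lip'.
have uE : jumarie_int a u =
    jumarie_int a u1 + (fun t => jumarie_int a u t - jumarie_int a u1 t).
  by apply/funext => t /=; rewrite addrC subrK.
have [dG G'] := is_deriveD (derivableP (ex1 t0 t00)) dD.
split; first by rewrite /jumarie_exists uE.
by rewrite /jumarie !derive1E uE G' addr0.
Qed.
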